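(* Let $d\ge3$, $\mathcal D=\mathbb S_1^{d-1}$, $M\in\mathrm{SL}(d+1,\mathbb R)$, $K=\mathcal G_{\mathcal D}(M)$, and let $(u_1,\vec v_1),\dots,(u_K,\vec v_K)\in\mathcal Q_{\mathcal D}(M)$ satisfy (V1)–(V3). If $(u,\vec v)\in\mathcal Q_{\mathcal D}(M)$ with $u\in(-1/2,1/2)$, then $|\vec v_K|\le|\vec v|$. Consequently, if $u_i\in(-1/2,1/2)$ for some $1\le i\le K$, then $i=K$.
   Context: $\mathbb S_1^{d-1}$ is the unit sphere. Row vectors in $\mathbb R^{d+1}$ are written $(u,\vec v)$, $u\in\mathbb R$, $\vec v\in\mathbb R^d$; $\mathbb Z^{d+1}M=\{\vec mM:\vec m\in\mathbb Z^{d+1}\}$. For $\mathcal D\subseteq\mathbb S_1^{d-1}$: $\mathcal Q_{\mathcal D}(M,t)=\{(u,\vec v)\in\mathbb Z^{d+1}M:-t<u<1-t,\ \vec v\in\mathbb R_{>0}\mathcal D\}$ for $t\in(0,1)$; $\mathcal Q_{\mathcal D}(M)=\{(u,\vec v)\in\mathbb Z^{d+1}M:|u|<1,\ \vec v\in\mathbb R_{>0}\mathcal D\}$; $F_{\mathcal D}(M,t)=\min\{|\vec v|:(u,\vec v)\in\mathcal Q_{\mathcal D}(M,t)\}$; $\mathcal F_{\mathcal D}(M)=\{F_{\mathcal D}(M,t):0<t<1\}$, $\mathcal G_{\mathcal D}(M)=|\mathcal F_{\mathcal D}(M)|$. Conditions: (V1) $0<|\vec v_1|<\cdots<|\vec v_K|$;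 (V2) each $\delta\in\mathcal F_{\mathcal D}(M)$ equals $|\vec v_i|$ for some $i$; (V3) for each $i$ there is $t\in(0,1)$ with $(u_i,\vec v_i)\in\mathcal Q_{\mathcal D}(M,t)$ and $|\vec v_i|=F_{\mathcal D}(M,t)$. *)

From HB Require Import structures.
From mathcomp Require Import all_boot all_order all_algebra.
From mathcomp Require Import reals.
Set Implicit Arguments. Unset Strict Implicit. Unset Printing Implicit Defensive.
Import Order.TTheory GRing.Theory Num.Theory.
Local Open Scope ring_scope.

Section Defs.
Variable R : realType.

Definition enorm (d : nat) (v : 'rV[R]_d) : R := Num.sqrt (\sum_i (v 0 i) ^+ 2).

Definition unit_sphere (d : nat) : 'rV[R]_d -> Prop := fun w => enorm w = 1.

Definition pos_cone (d : nat) (D : 'rV[R]_d -> Prop) (v : 'rV[R]_d) : Prop :=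
  exists r : R, 0 < r /\ exists w, D w /\ v = r *: w.

Definition in_lattice (d : nat) (M : 'M[R]_(1 + d)) (u : R) (v : 'rV[R]_d) : Prop :=
  exists m : 'rV[int]_(1 + d),
    row_mx (u%:M : 'M[R]_1) v = map_mx (fun z : int => z%:~R) m *m M.

Definition QDt (d : nat) (D : 'rV[R]_d -> Prop) (M : 'M[R]_(1 + d)) (t : R)
    (u : R) (v : 'rV[R]_d) : Prop :=
  in_lattice M u v /\ - t < u /\ u < 1 - t /\ pos_cone D v.

Definition QD (d : nat) (D : 'rV[R]_d -> Prop) (M : 'M[R]_(1 + d))
    (u : R) (v : 'rV[R]_d) : Prop :=
  in_lattice M u v /\ `|u| < 1 /\ pos_cone D v.

(* "F_D(M, t) = delta": delta is the minimum of |v| over Q_D(M, t)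
   (the minimum exists and equals delta) *)
Definition is_FD (d : nat) (D : 'rV[R]_d -> Prop) (M : 'M[R]_(1 + d)) (t delta : R)
    : Prop :=
  (exists u v, QDt D M t u v /\ enorm v = delta) /\
  (forall u v, QDt D M t u v -> delta <= enorm v).

Definition FDset (d : nat) (D : 'rV[R]_d -> Prop) (M : 'M[R]_(1 + d)) (delta : R)
    : Prop :=
  exists t : R, 0 < t /\ t < 1 /\ is_FD D M t delta.

Definition has_card (A : R -> Prop) (n : nat) : Prop :=
  exists s : seq R, uniq s /\ size s = n /\ (forall x, x \in s <-> A x).

End Defs.

From HB Require Import structures.
From mathcomp Require Import all_boot all_order all_algebra.
From mathcomp Require Import reals boolp zify lra.
Set Implicit Arguments. Unset Strict Implicit. Unset Printing Implicit Defensive.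
Import Order.TTheory GRing.Theory Num.Theory.
Local Open Scope ring_scope.

(* If 0 < t < 1 and |u| < 1/2, then u or -u lies in the window (-t, 1-t).
   Since Z^{d+1}M and R_{>0} S^{d-1} are both invariant under negation, every
   (u, v) in Q_D(M) with |u| < 1/2 competes, up to sign, in the minimum
   defining F_D(M, t) for every t; taking the t that (V3) attaches to v_K gives
   |v| >= |v_K|.  Discreteness of the lattice makes F_D(M, 1/2) exist, so
   F_D(M) is nonempty and K >= 1.  The strict increase of the |v_i| then forces
   i = K. *)

Lemma ex_min_finite_sublevel (T : choiceType) (dU : Order.disp_t)
    (U : orderType dU) (P : T -> Prop) (f : T -> U) (s : seq T) x0 :
  P x0 -> (forall x, P x -> (f x <= f x0)%O -> x \in s) ->
  exists2 x, P x & forall y, P y -> (f x <= f y)%O.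
Proof.
move=> Px0 sub_s; have x0s : x0 \in s by exact: sub_s.
have [[x xs] /asboolP Px minx] := arg_minP (i0 := SeqSub x0s)
  (P := fun y : seq_sub s => `[< P (val y) >]) (f \o val) (asboolT Px0).
exists x => // y Py.
have [fy|fy] := leP (f x0) (f y).
  by apply: le_trans fy; apply: (minx (SeqSub x0s)); exact/asboolP.
by apply: (minx (SeqSub (sub_s y Py (ltW fy)))); exact/asboolP.
Qed.

Lemma bounded_int_rows_finite n (N : nat) :
  exists s : seq 'rV[int]_n,
    forall m : 'rV[int]_n, (forall j, `|m 0 j| <= N%:Z) -> m \in s.
Proof.
exists [seq \row_j ((f j : nat)%:Z - N%:Z)
         | f : {ffun 'I_n -> 'I_N.*2.+1} <- enum {ffun 'I_n -> 'I_N.*2.+1}].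
move=> m mN; apply/mapP.
exists [ffun j => inord (absz (m 0 j + N%:Z))]; first by rewrite mem_enum.
by apply/rowP => j; rewrite !mxE ffunE inordK; move: (m 0 j) (mN j) => /= z; lia.
Qed.

Section CenteredLatticePoints.
Variable R : realType.

Lemma enorm_ge0 d (v : 'rV[R]_d) : 0 <= enorm v.
Proof. exact: sqrtr_ge0. Qed.

Lemma enormN d (v : 'rV[R]_d) : enorm (- v) = enorm v.
Proof.
by rewrite /enorm; congr Num.sqrt; apply: eq_bigr => j _; rewrite mxE sqrrN.
Qed.

Lemma normr_le_enorm d (v : 'rV[R]_d) i : `|v 0 i| <= enorm v.
Proof.
rewrite /enorm -sqrtr_sqr ler_sqrt ?sumr_ge0 // => [|j _]; last exact: sqr_ge0.
by rewrite (bigD1 i) //= lerDl sumr_ge0 // => j _; exact: sqr_ge0.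
Qed.

Lemma normr_row_mx_le d (u : R) (v : 'rV[R]_d) k :
  `|row_mx (u%:M : 'M_1) v 0 k| <= `|u| + enorm v.
Proof.
rewrite -(splitK k); case: (split k) => k' /=.
  by rewrite row_mxEl (ord1 k') mxE eqxx mulr1n lerDl enorm_ge0.
by rewrite row_mxEr ler_wpDl // normr_le_enorm.
Qed.

Definition lattice_point n (M : 'M[R]_n) (m : 'rV[int]_n) : 'rV[R]_n :=
  map_mx (fun z : int => z%:~R) m *m M.

Lemma in_lattice_coords d (M : 'M[R]_(1 + d)) u v : in_lattice M u v ->
  exists m, lsubmx (lattice_point M m) 0 0 = u /\ rsubmx (lattice_point M m) = v.
Proof.
move=> [m hm]; exists m.
by rewrite /lattice_point -hm row_mxKl row_mxKr mxE eqxx mulr1n.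
Qed.

Lemma in_latticeN d (M : 'M[R]_(1 + d)) u v :
  in_lattice M u v -> in_lattice M (- u) (- v).
Proof.
move=> [m hm]; exists (- m).
have -> : map_mx (fun z : int => z%:~R) (- m) =
    - map_mx (fun z : int => z%:~R) m :> 'rV[R]_(1 + d).
  by apply/matrixP => i j; rewrite !mxE intrN.
rewrite mulNmx -hm opp_row_mx; congr row_mx.
by apply/matrixP => i j; rewrite !mxE mulNrn.
Qed.

Lemma lattice_point_coord_bound n (M : 'M[R]_n) (B : R) : M \in unitmx ->
  exists N : nat, forall m,
    (forall j, `|lattice_point M m 0 j| <= B) -> forall j, `|m 0 j| <= N%:Z.
Proof.
move=> unitM; set C := \sum_k \sum_j `|invmx M k j|.
have BC0 : 0 <= `|B| * C.
  by rewrite mulr_ge0 // sumr_ge0 // => k _; rewrite sumr_ge0.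
exists (Num.Def.archi_bound (`|B| * C)) => m mB j.
rewrite -(ler_int R) intr_norm -pmulrn; apply: ltW.
apply: le_lt_trans (archi_boundP BC0).
have -> : (m 0 j)%:~R = (lattice_point M m *m invmx M) 0 j.
  by rewrite /lattice_point mulmxK // mxE.
rewrite mxE; apply: le_trans (ler_norm_sum _ _ _) _.
rewrite /C mulr_sumr; apply: ler_sum => k _; rewrite normrM.
apply: ler_pM => //; first exact: le_trans (mB k) (ler_norm B).
by rewrite (bigD1 j) //= lerDl sumr_ge0.
Qed.

Lemma unit_sphereN d (w : 'rV[R]_d) : unit_sphere w -> unit_sphere (- w).
Proof. by rewrite /unit_sphere enormN. Qed.

Lemma pos_coneN d (D : 'rV[R]_d -> Prop) v :
  (forall w, D w -> D (- w)) -> pos_cone D v -> pos_cone D (- v).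
Proof.
move=> Dsym [r [r0 [w [Dw ->]]]].
by exists r; split=> //; exists (- w); split; [exact: Dsym | rewrite scalerN].
Qed.

Section MinimalHeights.
Variables (d : nat) (D : 'rV[R]_d -> Prop) (M : 'M[R]_(1 + d)).

Lemma is_FD_exists (t u : R) v :
  M \in unitmx -> 0 < t -> t < 1 -> QDt D M t u v ->
  exists delta, is_FD D M t delta.
Proof.
move=> unitM t0 t1 [Luv Quv].
pose P m :=
  QDt D M t (lsubmx (lattice_point M m) 0 0) (rsubmx (lattice_point M m)).
pose f m := enorm (rsubmx (lattice_point M m)).
have [m0 [um0 vm0]] := in_lattice_coords Luv.
have Pm0 : P m0 by rewrite /P um0 vm0.
have [N boundN] := lattice_point_coord_bound (1 + enorm v) unitM.
have [s sN] := bounded_int_rows_finite (1 + d) N.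
have [m Pm minm] : exists2 m, P m & forall m', P m' -> f m <= f m'.
  apply: (ex_min_finite_sublevel (s := s) Pm0) => m' [_ [ut1 [ut2 _]]].
  rewrite /f vm0 => fm'.
  apply/sN/boundN => k; rewrite -(hsubmxK (lattice_point M m')).
  rewrite (mx11_scalar (lsubmx _)); apply: le_trans (normr_row_mx_le _ _ _) _.
  by apply: lerD => //; rewrite ler_norml; apply/andP; split; lra.
exists (f m); split.
  by exists (lsubmx (lattice_point M m) 0 0), (rsubmx (lattice_point M m)).
move=> u' v' [Luv' Quv']; have [m' [um' vm']] := in_lattice_coords Luv'.
by rewrite -vm'; apply: minm; rewrite /P um' vm'.
Qed.

Lemma FDset_centered (u : R) v : M \in unitmx -> QD D M u v -> `|u| < 1 / 2 ->
  exists delta, FDset D M delta.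
Proof.
move=> unitM [Luv [_ Cv]]; rewrite ltr_norml => /andP[lo hi].
have Q : QDt D M (1 / 2) u v by split; [|split; [lra|split; [lra|]]].
have [delta Fdelta] : exists delta, is_FD D M (1 / 2) delta.
  by apply: (is_FD_exists unitM _ _ Q); lra.
by exists delta, (1 / 2); split; [lra|split; [lra|]].
Qed.

Hypothesis Dsym : forall w, D w -> D (- w).

Lemma QD_centered_QDt (t u : R) v :
  0 < t -> t < 1 -> QD D M u v -> `|u| < 1 / 2 ->
  QDt D M t u v \/ QDt D M t (- u) (- v).
Proof.
move=> t0 t1 [Luv [_ Cv]]; rewrite ltr_norml => /andP[lo hi].
have [/andP[ut1 ut2]|ut] := boolP ((- t < u) && (u < 1 - t)); first by left.
have /andP[ut1 ut2] : (- t < - u) && (- u < 1 - t).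
  by move: ut; rewrite negb_and -!leNgt => /orP[] ut; apply/andP; split; lra.
by right; split; [exact: in_latticeN | split; [|split; [|exact: pos_coneN]]].
Qed.

Lemma is_FD_le_centered (t delta u : R) v :
  0 < t -> t < 1 -> is_FD D M t delta -> QD D M u v -> `|u| < 1 / 2 ->
  delta <= enorm v.
Proof.
move=> t0 t1 [_ minF] Quv cu.
have [Q|Q] := QD_centered_QDt t0 t1 Quv cu; first exact: minF Q.
by rewrite -enormN; exact: minF Q.
Qed.

End MinimalHeights.
End CenteredLatticePoints.

Theorem proposition6p2 (R : realType) (d : nat) (M : 'M[R]_(1 + d)) (K : nat)
    (us : nat -> R) (vs : nat -> 'rV[R]_d) :
  (3 <= d)%N ->
  \det M = 1 ->
  has_card (FDset (@unit_sphere R d) M) K ->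
  (forall i, (1 <= i <= K)%N -> QD (@unit_sphere R d) M (us i) (vs i)) ->
  (* (V1) *)
  ((0 < K)%N -> 0 < enorm (vs 1%N)) ->
  (forall i, (1 <= i < K)%N -> enorm (vs i) < enorm (vs i.+1)) ->
  (* (V2) *)
  (forall delta, FDset (@unit_sphere R d) M delta ->
     exists i, (1 <= i <= K)%N /\ delta = enorm (vs i)) ->
  (* (V3) *)
  (forall i, (1 <= i <= K)%N -> exists t : R, 0 < t /\ t < 1 /\
     QDt (@unit_sphere R d) M t (us i) (vs i) /\
     is_FD (@unit_sphere R d) M t (enorm (vs i))) ->
  (forall (u : R) (v : 'rV[R]_d), QD (@unit_sphere R d) M u v ->
     - (1 / 2) < u -> u < 1 / 2 -> enorm (vs K) <= enorm v) /\
  (forall i, (1 <= i <= K)%N -> - (1 / 2) < us i -> us i < 1 / 2 -> i = K).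
Proof.
move=> _ detM _ QDvs _ vs_incr V2 V3.
have unitM : M \in unitmx by rewrite unitmxE detM unitr1.
have vsK_min u v : QD (@unit_sphere R d) M u v ->
    - (1 / 2) < u -> u < 1 / 2 -> enorm (vs K) <= enorm v.
  move=> Quv lo hi; have cu : `|u| < 1 / 2 by rewrite ltr_norml lo.
  have [delta Fdelta] := FDset_centered unitM Quv cu.
  have [i [/andP[i1 iK] _]] := V2 _ Fdelta.
  have K1 : (1 <= K <= K)%N by rewrite (leq_trans i1 iK) leqnn.
  have [t [t0 [t1 [_ FDt]]]] := V3 K K1.
  by apply: (is_FD_le_centered (@unit_sphereN R d) _ _ FDt Quv cu).
have lt_vs : {in [pred j | (1 <= j <= K)%N] &,
    {homo (fun j => enorm (vs j)) : a b / (a < b)%N >-> a < b}}.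
  apply: homo_ltn_in => [|a b|a]; first exact: lt_trans.
    rewrite !inE => /andP[a1 _] /andP[_ bK] c /andP[ac cb].
    by apply/andP; split; lia.
  by rewrite !inE => /andP[a1 _] /andP[_ aK]; apply: vs_incr; rewrite a1.
split=> // i iK lo hi; have vsK_le := vsK_min _ _ (QDvs i iK) lo hi.
apply/eqP; rewrite eqn_leq (andP iK).2 leqNgt /=; apply/negP => iltK.
have K1 : (1 <= K <= K)%N by rewrite (leq_trans (andP iK).1 (ltnW iltK)) leqnn.
by have := lt_vs i K iK K1 iltK; rewrite ltNge vsK_le.
Qed.
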